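(* Let $n \ge 1$, let $\mathcal{H}$ be a finite-dimensional Hilbert space and let $S$ be any system of the classical-quantum theory. Every leak $l : \mathcal{D}_n \otimes \mathcal{B}(\mathcal{H}) \to \mathcal{D}_n \otimes \mathcal{B}(\mathcal{H}) \otimes S$ for the composite classical-quantum system $\mathcal{D}_n \otimes \mathcal{B}(\mathcal{H})$ is of the form $$ l(|i\rangle\langle i| \otimes \rho) = |i\rangle\langle i| \otimes \rho \otimes \Lambda(|i\rangle\langle i|) \qquad (i = 1,\dots,n,\ \rho \in \mathcal{B}(\mathcal{H})),$$ for some causal (trace-preserving completely positive) process $\Lambda : \mathcal{D}_n \to S$; that is, $l$ copies the classical input, applies $\Lambda$ to one copy to produce the leaked output, and acts as the identity on the quantum input.
   Context: The classical-quantum process theory: systems are finite-dimensional algebras of the form $\mathcal{D}_n \otimes \mathcal{B}(\mathcal{H})$, where $\mathcal{D}_n$ is the algebra of diagonal $n\times n$ complex matrices (an $n$-state classical system, spanned by $|i\rangle\langle i|$) and $\mathcal{H}$ a finite-dimensional Hilbert space (a quantum system); composite systems are tensor products (with $\mathcal{D}_n\otimes\mathcal{D}_m \cong \mathcal{D}_{nm}$). Processes are completely positive maps between these algebras; discarding is the trace (partial trace on a factor), and a process is causal iff it is trace preserving. A leak for a system $A$ is a process $l : A \to A \otimes S$ such that tracing out the $S$ output gives the identity on $A$. *)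

(* Classical-quantum process theory, concretely:
   - scalars: C, a numeric closed field (instantiated with R[i], R : realType, i.e. the complex numbers);
   - an algebra A is represented as a subalgebra of a full matrix algebra 'M[C]_N, given by a membership predicate;
   - the tensor product of subalgebras is the (algebraic) span of Kronecker products x *t y (mxtens);
   - D_n = diagonal n x n matrices, B(C^d) = all d x d matrices, D_n (x) B(C^d) = their tensor product. *)
From HB Require Import structures.
From mathcomp Require Import all_boot all_algebra.
From mathcomp Require Import reals.
From mathcomp Require Export complex mxtens.

Set Implicit Arguments.
Unset Strict Implicit.
Unset Printing Implicit Defensive.

Import GRing.Theory Num.Theory.
Local Open Scope ring_scope.

Section CQ.
Variable C : numClosedFieldType.

Definition adjv N (v : 'cV[C]_N) : 'rV[C]_N := (map_mx (fun z => z^*) v)^T.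

(* Positivity of a d x d block matrix with blocks in 'M_N, i.e. of an element of
   M_d (x) M_N: v^* X v >= 0 for every vector v = (v_1,...,v_d), v_i in C^N. *)
Definition blockpos N d (X : 'I_d -> 'I_d -> 'M[C]_N) : Prop :=
  forall v : 'I_d -> 'cV[C]_N,
    0 <= \sum_(i < d) \sum_(j < d) (adjv (v i) *m X i j *m v j) 0 0.

Definition diag_alg n : 'M[C]_n -> Prop := fun X => is_diag_mx X.
Definition full_alg N : 'M[C]_N -> Prop := fun _ => True.

Definition tens_alg N M (inA : 'M[C]_N -> Prop) (inB : 'M[C]_M -> Prop)
  : 'M[C]_(N * M) -> Prop :=
  fun X => exists (p : nat) (xs : 'I_p -> 'M[C]_N) (ys : 'I_p -> 'M[C]_M),
    (forall r, inA (xs r) /\ inB (ys r)) /\ X = \sum_(r < p) (xs r *t ys r).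

Definition cq_alg n d : 'M[C]_(n * d) -> Prop := tens_alg (@diag_alg n) (@full_alg d).

Definition linmap N M (f : 'M[C]_N -> 'M[C]_M) : Prop :=
  forall (a : C) x y, f (a *: x + y) = a *: f x + f y.

(* complete positivity of f on the subalgebra inA: id_{M_d} (x) f is positive for all d *)
Definition CP N M (inA : 'M[C]_N -> Prop) (f : 'M[C]_N -> 'M[C]_M) : Prop :=
  forall d (X : 'I_d -> 'I_d -> 'M[C]_N),
    (forall i j, inA (X i j)) -> blockpos X -> blockpos (fun i j => f (X i j)).

Definition process N M (inA : 'M[C]_N -> Prop) (inB : 'M[C]_M -> Prop)
  (f : 'M[C]_N -> 'M[C]_M) : Prop :=
  [/\ linmap f, (forall x, inA x -> inB (f x)) & CP inA f].

Definition causal N M (inA : 'M[C]_N -> Prop) (f : 'M[C]_N -> 'M[C]_M) : Prop :=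
  forall x, inA x -> \tr (f x) = \tr x.

Definition ptrace2 N M (X : 'M[C]_(N * M)) : 'M[C]_N :=
  \matrix_(a, b) \sum_(c < M) X (mxtens_index (a, c)) (mxtens_index (b, c)).

Definition leak N M (inA : 'M[C]_N -> Prop) (inS : 'M[C]_M -> Prop)
  (l : 'M[C]_N -> 'M[C]_(N * M)) : Prop :=
  process inA (tens_alg inA inS) l /\ (forall x, inA x -> ptrace2 (l x) = x).

End CQ.

(* Set Lambda(D) := Tr_1 l(D (x) |e><e|) for a fixed basis vector e of C^d.
   Fix i.  The block matrix (|i p><i q|)_(p,q) is positive, so by complete
   positivity of l so is Y := (l(|i><i| (x) |p><q|))_(p,q), and since l is a leak
   the partial trace of each block Y_(p,q) over the leaked system is the rank-one
   matrix |i p><i q|.  Flattening Y into one positive semidefinite matrix, the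
   Cauchy-Schwarz inequality shows that every row and column outside the support
   of this marginal vanishes and that the rows (and columns) indexed by
   (p, ((i, p), c)) do not depend on p.  Hence Y_(p,q) = |i p><i q| (x) tau with a
   single tau, which is Lambda(|i><i|); linearity in rho gives the formula. *)

From HB Require Import structures.
From mathcomp Require Import all_boot all_algebra.
From mathcomp Require Import reals.
From mathcomp Require Import complex mxtens.
From mathcomp Require Import ring.
Import GRing.Theory Num.Theory Num.Def.
Local Open Scope ring_scope.

Set Implicit Arguments.
Unset Strict Implicit.
Unset Printing Implicit Defensive.

Local Notation ix a c := (mxtens_index (a, c)).

Lemma tensmx_is_bilinear (R : comNzRingType) m n p q : bilinear_for
  (GRing.Scale.Law.clone _ _ *:%R _) (GRing.Scale.Law.clone _ _ *:%R _)
  (@tensmx R m n p q).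
Proof.
split=> [B|A] a X Y; apply/matrixP => i j; rewrite !mxE.
  by rewrite mulrDl mulrA.
by rewrite mulrDr mulrCA.
Qed.

HB.instance Definition _ (R : comNzRingType) m n p q :=
  bilinear_isBilinear.Build R 'M[R]_(m, n) 'M[R]_(p, q) 'M[R]_(m * p, n * q)
    _ _ (@tensmx R m n p q) (tensmx_is_bilinear R m n p q).

Section PsdMatrices.
Variable C : numClosedFieldType.

Lemma real_affine_ge0_eq0 (r q : C) :
  (forall x, x \is Num.real -> 0 <= x * r + q) -> r = 0.
Proof.
move=> ge0; have /ger0_real q_real := ge0 0 (real0 _); rewrite mul0r add0r in q_real.
have /ger0_real rq_real := ge0 1 (real1 _); rewrite mul1r in rq_real.
have r_real : r \is Num.real by rewrite -(addrK q r) realB.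
apply/eqP; apply: contraT => rN0.
have x_real : - (q + 1) / r \is Num.real.
  by rewrite rpredM ?rpredV ?rpredN ?rpredD ?rpred1.
have := ge0 _ x_real.
by rewrite mulfVK // opprD addrAC addNr add0r oppr_ge0 ler10.
Qed.

Lemma psd_affine_eq0 (b b' q : C) :
  (forall s : C, 0 <= s * b + s^* * b' + q) -> b = 0 /\ b' = 0.
Proof.
(* Test with real [s], then with purely imaginary [s]. *)
move=> ge0.
have sum0 : b + b' = 0.
  apply: (@real_affine_ge0_eq0 _ q) => x /conj_Creal xE.
  by have := ge0 x; rewrite xE mulrDr.
have diff0 : 'i * (b - b') = 0.
  apply: (@real_affine_ge0_eq0 _ q) => x /conj_Creal xE.
  by have := ge0 ('i * x); rewrite rmorphM /= xE conjCi; congr (0 <= _ + q); ring.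
move/eqP: diff0; rewrite mulf_eq0 (negbTE (neq0Ci C)) subr_eq0 /= => /eqP bE.
move: sum0; rewrite -bE -mulr2n => /eqP; rewrite mulrn_eq0 /= => /eqP b0.
by rewrite b0.
Qed.

Definition psdmx n (A : 'M[C]_n) := forall u : 'rV_n, 0 <= form conjC A u u.

Section Psd.
Variables (n : nat) (A : 'M[C]_n).
Hypothesis A_psd : psdmx A.

Lemma psdmx_form_eq0 u : form conjC A u u = 0 ->
  forall v, form conjC A u v = 0 /\ form conjC A v u = 0.
Proof.
move=> uu0 v; apply: (@psd_affine_eq0 _ _ (form conjC A v v)) => s.
have := A_psd (s *: u + v).
by rewrite !formDl !formZl !formDr !formZr uu0; congr (0 <= _); ring.
Qed.

Lemma psdmx_diag_ge0 i : 0 <= A i i.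
Proof. by rewrite -(formee conjC); apply: A_psd. Qed.

Lemma psdmx_diag_eq0 i : A i i = 0 -> forall j, A i j = 0 /\ A j i = 0.
Proof.
by rewrite -!(formee conjC) => /psdmx_form_eq0 Aii0 j; rewrite -!(formee conjC).
Qed.

Lemma form_delta_sub i j :
  form conjC A ('e_i - 'e_j) ('e_i - 'e_j) = A i i + A j j - A i j - A j i.
Proof. by rewrite !(formDl, formNl, formDr, formNr, formee); ring. Qed.

Lemma psdmx_sub_ge0 i j : 0 <= A i i + A j j - A i j - A j i.
Proof. by rewrite -form_delta_sub; apply: A_psd. Qed.

Lemma psdmx_sub_eq0 i j : A i i + A j j - A i j - A j i = 0 ->
  forall k, A i k = A j k /\ A k i = A k j.
Proof.
rewrite -form_delta_sub => /psdmx_form_eq0 null k; have [] := null 'e_k.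
by rewrite formDl formNl formDr formNr !formee => /subr0_eq-> /subr0_eq->.
Qed.

End Psd.
End PsdMatrices.

Section BlockMatrices.
Variable C : numClosedFieldType.

Lemma sum_mxtens (V : nmodType) N M (F : 'I_(N * M) -> V) :
  \sum_z F z = \sum_a \sum_c F (ix a c).
Proof.
rewrite pair_big (reindex (@mxtens_index N M)) /=; last first.
  by exists (@mxtens_unindex N M) => z _; [apply: mxtens_indexK | apply: mxtens_unindexK].
by apply: eq_bigr => -[a c].
Qed.

Lemma form_sumE n (A : 'M[C]_n) u v :
  form conjC A u v = \sum_i \sum_j u 0 i * A i j * (v 0 j)^*.
Proof.
rewrite /form mxE exchange_big; apply: eq_bigr => j _.
by rewrite !mxE big_distrl.
Qed.

Definition adjmx m n (B : 'M[C]_(m, n)) : 'M[C]_(n, m) := (map_mx conjC B)^T.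

Lemma adjmxK m n (B : 'M[C]_(m, n)) : adjmx (adjmx B) = B.
Proof. by apply/matrixP => i j; rewrite !mxE conjCK. Qed.

Lemma adjvE N (v : 'cV[C]_N) : adjv v = adjmx v.
Proof. by []. Qed.

Lemma adjmx_mul m n p (A : 'M[C]_(m, n)) (B : 'M[C]_(n, p)) :
  adjmx (A *m B) = adjmx B *m adjmx A.
Proof. by rewrite /adjmx map_mxM trmx_mul. Qed.

Lemma adjv_form N (A : 'M[C]_N) v w :
  (adjv v *m A *m w) 0 0 = form conjC A (adjv v) (adjv w).
Proof. by rewrite /form /adjv trmxK map_mxCK. Qed.

Definition blockmx D N (Y : 'I_D -> 'I_D -> 'M[C]_N) : 'M[C]_(D * N) :=
  \matrix_(i, j) Y (mxtens_unindex i).1 (mxtens_unindex j).1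
                   (mxtens_unindex i).2 (mxtens_unindex j).2.

Lemma blockmxE D N (Y : 'I_D -> 'I_D -> 'M[C]_N) p q x y :
  blockmx Y (ix p x) (ix q y) = Y p q x y.
Proof. by rewrite mxE !mxtens_indexK. Qed.

Lemma blockpos_psdmx D N (Y : 'I_D -> 'I_D -> 'M[C]_N) :
  blockpos Y -> psdmx (blockmx Y).
Proof.
move=> Y_pos u; have := Y_pos (fun p => adjmx (\row_x u 0 (ix p x))).
under eq_bigr do under eq_bigr do rewrite adjv_form !adjvE !adjmxK.
rewrite form_sumE sum_mxtens; congr (0 <= _); apply: eq_bigr => p _.
rewrite exchange_big /= sum_mxtens; apply: eq_bigr => q _.
rewrite form_sumE exchange_big; apply: eq_bigr => x _; apply: eq_bigr => y _.
by rewrite blockmxE !mxE.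
Qed.

Lemma blockpos_conjmx D N N' (Y : 'I_D -> 'I_D -> 'M[C]_N) (B : 'M[C]_(N, N')) :
  blockpos Y -> blockpos (fun p q => adjmx B *m Y p q *m B).
Proof.
move=> Y_pos v; have := Y_pos (fun p => B *m v p); congr (0 <= _).
by apply: eq_bigr => p _; apply: eq_bigr => q _; rewrite [adjv _]adjmx_mul !mulmxA.
Qed.

Lemma blockpos_sum D N (I : finType) (Y : I -> 'I_D -> 'I_D -> 'M[C]_N) :
  (forall a, blockpos (Y a)) -> blockpos (fun p q => \sum_a Y a p q).
Proof.
move=> Y_pos v.
under eq_bigr do under eq_bigr do rewrite mulmx_sumr mulmx_suml summxE.
under eq_bigr do rewrite exchange_big /=.
by rewrite exchange_big /=; apply: sumr_ge0 => a _; exact: Y_pos.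
Qed.

Lemma adjv_delta_mxE N (v w : 'cV[C]_N) a b :
  (adjv v *m delta_mx a b *m w) 0 0 = (v a 0)^* * w b 0.
Proof.
rewrite -(mul_delta_mx (0 : 'I_1)) mulmxA -colE -mulmxA -rowE.
by rewrite mxE big_ord1 !mxE.
Qed.

Lemma blockpos_delta D N (f : 'I_D -> 'I_N) :
  blockpos (fun p q => delta_mx (f p) (f q) : 'M[C]_N).
Proof.
move=> v; under eq_bigr do under eq_bigr do rewrite adjv_delta_mxE.
under eq_bigr do rewrite -big_distrr /=.
by rewrite -big_distrl /= -(rmorph_sum conjC) mulrC mul_conjC_ge0.
Qed.
End BlockMatrices.

Section PartialTrace.
Variable C : numClosedFieldType.

Definition ptrace1 N M (X : 'M[C]_(N * M)) : 'M[C]_M :=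
  \matrix_(c, c') \sum_a X (ix a c) (ix a c').

Fact ptrace1_is_linear N M : linear (@ptrace1 N M).
Proof.
move=> s X Y; apply/matrixP => c c'; rewrite !mxE mulr_sumr -big_split.
by apply: eq_bigr => a _; rewrite !mxE.
Qed.

HB.instance Definition _ N M :=
  GRing.isLinear.Build C 'M[C]_(N * M) 'M[C]_M _ (@ptrace1 N M) (@ptrace1_is_linear N M).

Lemma mxtrace_ptrace1 N M (X : 'M[C]_(N * M)) : \tr (ptrace1 X) = \tr X.
Proof.
by rewrite [RHS]sum_mxtens exchange_big; apply: eq_bigr => c _; rewrite mxE.
Qed.

Lemma mxtrace_ptrace2 N M (X : 'M[C]_(N * M)) : \tr (ptrace2 X) = \tr X.
Proof. by rewrite [RHS]sum_mxtens; apply: eq_bigr => a _; rewrite mxE. Qed.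

Lemma mxtrace_tensmx N M (A : 'M[C]_N) (B : 'M[C]_M) : \tr (A *t B) = \tr A * \tr B.
Proof.
rewrite /mxtrace sum_mxtens big_distrl; apply: eq_bigr => a _.
by rewrite big_distrr; apply: eq_bigr => c _; rewrite tensmxE.
Qed.

Lemma mxtrace_delta N (i : 'I_N) : \tr (delta_mx i i : 'M[C]_N) = 1.
Proof.
rewrite /mxtrace (bigD1 i) //= big1 => [|j /negbTE jNi]; rewrite mxE ?jNi //.
by rewrite eqxx addr0.
Qed.

Lemma tensmx_delta N M (a b : 'I_N) (c e : 'I_M) :
  delta_mx a b *t delta_mx c e = delta_mx (ix a c) (ix b e) :> 'M[C]_(N * M).
Proof.
apply/matrixP => z w; case: (mxtens_indexP z) => x y; case: (mxtens_indexP w) => x' y'.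
rewrite tensmxE !mxE !(inj_eq (can_inj (@mxtens_indexK N M))) !xpair_eqE.
by case: (x == a); case: (y == c); case: (x' == b); case: (y' == e);
  rewrite ?mulr1 ?mulr0.
Qed.

Lemma conjmxE m n (A : 'M[C]_m) (B : 'M[C]_(m, n)) i j :
  (adjmx B *m A *m B) i j = \sum_x \sum_y (B x i)^* * A x y * B y j.
Proof.
rewrite mxE exchange_big; apply: eq_bigr => y _.
by rewrite !mxE big_distrl; apply: eq_bigr => x _; rewrite !mxE.
Qed.

Lemma sum_pick2 m (A : 'M[C]_m) i j :
  \sum_x \sum_y ((x == i)%:R)^* * A x y * (y == j)%:R = A i j.
Proof.
rewrite (bigD1 i) //= [X in _ + X]big1 ?addr0 => [|x /negbTE ->]; last first.
  by apply: big1 => y _; rewrite conjC0 !mul0r.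
rewrite (bigD1 j) //= [X in _ + X]big1 ?addr0 => [|y /negbTE ->]; last first.
  by rewrite mulr0.
by rewrite !eqxx conjC1 mul1r mulr1.
Qed.

(* [ket_tens a] is |a> (x) 1 and [tens_bra e] is 1 (x) <e|. *)
Definition ket_tens {N M} (a : 'I_N) : 'M[C]_(N * M, M) :=
  \matrix_(z, c) (z == ix a c)%:R.

Definition tens_bra {N M} (e : 'I_M) : 'M[C]_(N, N * M) :=
  \matrix_(x, z) (ix x e == z)%:R.

Lemma ptrace1_conjmx N M (X : 'M[C]_(N * M)) :
  ptrace1 X = \sum_a adjmx (ket_tens a) *m X *m ket_tens a.
Proof.
apply/matrixP => c c'; rewrite !mxE summxE; apply: eq_bigr => a _.
by rewrite conjmxE; under eq_bigr do under eq_bigr do rewrite !mxE; rewrite sum_pick2.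
Qed.

Lemma tensmx_delta_conjmx N M (X : 'M[C]_N) (e : 'I_M) :
  X *t delta_mx e e = adjmx (tens_bra e) *m X *m tens_bra e.
Proof.
apply/matrixP => z w; case: (mxtens_indexP z) => x c; case: (mxtens_indexP w) => y c'.
rewrite tensmxE conjmxE mxE; under eq_bigr do under eq_bigr do
  rewrite !mxE !(inj_eq (can_inj (@mxtens_indexK N M))) !xpair_eqE.
have [_|_] := eqVneq c e; last first.
  by rewrite mulr0 big1 // => u _; rewrite big1 // => t _; rewrite andbF conjC0 !mul0r.
have [_|_] := eqVneq c' e; last first.
  by rewrite andbF mulr0 big1 // => u _; rewrite big1 // => t _; rewrite andbF mulr0.
by under eq_bigr do under eq_bigr do rewrite !andbT; rewrite sum_pick2 mulr1.
Qed.

Lemma blockpos_ptrace1 D N M (Z : 'I_D -> 'I_D -> 'M[C]_(N * M)) :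
  blockpos Z -> blockpos (fun p q => ptrace1 (Z p q)).
Proof.
move=> Z_pos v; under eq_bigr do under eq_bigr do rewrite ptrace1_conjmx.
exact: (blockpos_sum (fun a => blockpos_conjmx (ket_tens a) Z_pos)).
Qed.

Lemma blockpos_tensmx_delta D N M (X : 'I_D -> 'I_D -> 'M[C]_N) (e : 'I_M) :
  blockpos X -> blockpos (fun p q => X p q *t delta_mx e e).
Proof.
move=> X_pos v; under eq_bigr do under eq_bigr do rewrite tensmx_delta_conjmx.
exact: (blockpos_conjmx (tens_bra e) X_pos).
Qed.

End PartialTrace.

Section RankOneMarginal.
Variables (C : numClosedFieldType) (D N M : nat).
Variables (Y : 'I_D -> 'I_D -> 'M[C]_(N * M)) (f : 'I_D -> 'I_N).
Hypothesis Y_pos : blockpos Y.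
Hypothesis Y_marginal : forall p q, ptrace2 (Y p q) = delta_mx (f p) (f q).

Let A_psd : psdmx (blockmx Y) := blockpos_psdmx Y_pos.

Lemma marginal_sumE p q x y :
  \sum_c Y p q (ix x c) (ix y c) = ((x == f p) && (y == f q))%:R.
Proof. by have := congr1 (fun B : 'M[C]_N => B x y) (Y_marginal p q); rewrite !mxE. Qed.

Lemma marginal_off_support p q x c z : x != f p ->
  Y p q (ix x c) z = 0 /\ Y q p z (ix x c) = 0.
Proof.
move=> xNfp; rewrite -!blockmxE; apply: psdmx_diag_eq0 => //; rewrite blockmxE.
have Y_ge0 c' : 0 <= Y p p (ix x c') (ix x c') by rewrite -blockmxE psdmx_diag_ge0.
apply: (psumr_eq0P (P := xpredT) (fun c' _ => Y_ge0 c')) => //.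
by rewrite marginal_sumE (negbTE xNfp).
Qed.

Lemma marginal_support_shift p p' q c z :
  Y p q (ix (f p) c) z = Y p' q (ix (f p') c) z /\
  Y q p z (ix (f p) c) = Y q p' z (ix (f p') c).
Proof.
(* Each e_(p, f p, c) - e_(p', f p', c) has a nonnegative value under the form,
   and these values add up to 1 + 1 - 1 - 1 = 0 by the marginal condition. *)
rewrite -!blockmxE; apply: psdmx_sub_eq0 => //; rewrite !blockmxE.
pose F c := Y p p (ix (f p) c) (ix (f p) c) + Y p' p' (ix (f p') c) (ix (f p') c)
  - Y p p' (ix (f p) c) (ix (f p') c) - Y p' p (ix (f p') c) (ix (f p) c).
have F_ge0 c' : 0 <= F c' by rewrite /F -!blockmxE psdmx_sub_ge0.
apply: (psumr_eq0P (P := xpredT) (fun c' _ => F_ge0 c')) => //.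
by rewrite !big_split /= !sumrN !marginal_sumE !eqxx /= addrK subrr.
Qed.

Lemma blockpos_rank1_marginal p0 p q :
  Y p q = delta_mx (f p) (f q) *t ptrace1 (Y p0 p0).
Proof.
have tauE c c' : ptrace1 (Y p0 p0) c c' = Y p0 p0 (ix (f p0) c) (ix (f p0) c').
  rewrite mxE (bigD1 (f p0)) //= big1 ?addr0 // => x xN.
  exact: (marginal_off_support p0 c _ xN).1.
apply/matrixP => z w; case: (mxtens_indexP z) => x c; case: (mxtens_indexP w) => y c'.
rewrite tensmxE tauE mxE.
have [->|xN] := eqVneq x (f p); last by rewrite (marginal_off_support q c _ xN).1 mul0r.
have [->|yN] := eqVneq y (f q); last by rewrite (marginal_off_support p c' _ yN).2 mul0r.
rewrite mul1r (marginal_support_shift p p0 q c _).1.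
exact: (marginal_support_shift q p0 p0 c' _).2.
Qed.

End RankOneMarginal.

Section ClassicalQuantum.
Variable C : numClosedFieldType.

Lemma is_diag_delta_mx n (i : 'I_n) : is_diag_mx (delta_mx i i : 'M[C]_n).
Proof.
apply/is_diag_mxP => x y xNy; rewrite mxE; have [<-|//] := eqVneq x i.
by case: eqP => // yx; move: xNy; rewrite yx eqxx.
Qed.

Lemma cq_alg_tensmx n d (A : 'M[C]_n) (B : 'M[C]_d) : is_diag_mx A -> cq_alg (A *t B).
Proof. by move=> A_diag; exists 1%N, (fun=> A), (fun=> B); rewrite big_ord1. Qed.

Lemma cq_alg_offdiag m k (X : 'M[C]_(m * k)) a a' b b' :
  cq_alg X -> a != a' -> X (ix a b) (ix a' b') = 0.
Proof.
move=> [p [xs [ys [in_xy ->]]]] aNa'; rewrite summxE; apply: big1 => r _.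
by have /is_diag_mxP xs_diag := (in_xy r).1; rewrite tensmxE xs_diag ?mul0r.
Qed.

Lemma cq_alg_blockdiag m k (X : 'M[C]_(m * k)) :
  (forall a a' b b', a != a' -> X (ix a b) (ix a' b') = 0) -> cq_alg X.
Proof.
move=> X_offdiag; exists m, (fun a => delta_mx a a).
exists (fun a => \matrix_(b, b') X (ix a b) (ix a b')).
split=> [a|]; first by split=> //; apply: is_diag_delta_mx.
apply/matrixP => z w; case: (mxtens_indexP z) => a b; case: (mxtens_indexP w) => a' b'.
rewrite summxE (bigD1 a) //= big1 ?addr0 => [|r rNa]; last first.
  by rewrite tensmxE mxE eq_sym (negbTE rNa) mul0r.
rewrite tensmxE !mxE eqxx /=; have [<-|aNa'] := eqVneq a a'; first by rewrite mul1r.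
by rewrite X_offdiag ?mul0r.
Qed.

Lemma cq_alg_ptrace1 N m k (inA : 'M[C]_N -> Prop) (X : 'M[C]_(N * (m * k))) :
  tens_alg inA (@cq_alg C m k) X -> cq_alg (ptrace1 X).
Proof.
move=> [p [xs [ys [in_xy ->]]]]; apply: cq_alg_blockdiag => a a' b b' aNa'.
rewrite mxE; apply: big1 => z _; rewrite summxE; apply: big1 => r _.
by rewrite tensmxE (cq_alg_offdiag _ _ (in_xy r).2 aNa') mulr0.
Qed.

End ClassicalQuantum.

Section Leak.
Variables (C : numClosedFieldType) (n d m k : nat).
Variable l : 'M[C]_(n * d) -> 'M[C]_(n * d * (m * k)).
Hypothesis l_leak : leak (@cq_alg C n d) (@cq_alg C m k) l.
Variable e : 'I_d.

Let l_linear : linear l. Proof. by case: l_leak => -[]. Qed.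
HB.instance Definition _ := GRing.isLinear.Build C _ _ _ l l_linear.

Definition leak_channel (D : 'M[C]_n) : 'M[C]_(m * k) := ptrace1 (l (D *t delta_mx e e)).

Lemma leak_channel_process : process (@diag_alg C n) (@cq_alg C m k) leak_channel.
Proof.
have [[_ l_cq l_CP] _] := l_leak.
have cq_in D : diag_alg D -> cq_alg (D *t delta_mx e e) := @cq_alg_tensmx _ _ _ D _.
split.
- by move=> a x y; rewrite /leak_channel linearPl !linearP.
- by move=> D /cq_in /l_cq /cq_alg_ptrace1.
- move=> r X X_diag X_pos; apply/blockpos_ptrace1/l_CP => [p q|].
    exact: cq_in.
  exact: blockpos_tensmx_delta.
Qed.

Lemma leak_channel_causal : causal (@diag_alg C n) leak_channel.
Proof.
move=> D D_diag; rewrite mxtrace_ptrace1 -mxtrace_ptrace2 l_leak.2.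
  by rewrite mxtrace_tensmx mxtrace_delta mulr1.
exact: cq_alg_tensmx.
Qed.

Lemma leak_tensmx_delta i (rho : 'M[C]_d) :
  l (delta_mx i i *t rho) = (delta_mx i i *t rho) *t leak_channel (delta_mx i i).
Proof.
have [[_ _ l_CP] l_marginal] := l_leak.
pose X p q : 'M[C]_(n * d) := delta_mx i i *t delta_mx p q.
have X_cq p q : cq_alg (X p q) by apply/cq_alg_tensmx/is_diag_delta_mx.
have X_pos : blockpos X.
  move=> v; under eq_bigr do under eq_bigr do rewrite /X tensmx_delta.
  exact: blockpos_delta.
have lX p q : l (X p q) = X p q *t leak_channel (delta_mx i i).
  have Y_marginal p' q' : ptrace2 (l (X p' q')) = delta_mx (ix i p') (ix i q').
    by rewrite l_marginal // /X tensmx_delta.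
  by rewrite (blockpos_rank1_marginal (l_CP _ _ X_cq X_pos) Y_marginal e) -tensmx_delta.
rewrite (matrix_sum_delta rho) linear_sumr linear_sum linear_sumlz.
apply: eq_bigr => p _; rewrite linear_sumr linear_sum linear_sumlz.
by apply: eq_bigr => q _; rewrite linearZr_LR linearZ linearZl_LR /= lX.
Qed.

End Leak.

Theorem proposition5 (R : realType) (n d m k : nat) (hn : (0 < n)%N) (hd : (0 < d)%N)
  (l : 'M[R[i]]_(n * d) -> 'M[R[i]]_((n * d) * (m * k))) :
  leak (@cq_alg _ n d) (@cq_alg _ m k) l ->
  exists Lambda : 'M[R[i]]_n -> 'M[R[i]]_(m * k),
    [/\ process (@diag_alg _ n) (@cq_alg _ m k) Lambda,
        causal (@diag_alg _ n) Lambda &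
        forall (i : 'I_n) (rho : 'M[R[i]]_d),
          l (delta_mx i i *t rho) = (delta_mx i i *t rho) *t Lambda (delta_mx i i)].
Proof.
move=> l_leak; exists (leak_channel l (Ordinal hd)); split.
- exact: leak_channel_process.
- exact: leak_channel_causal.
- exact: leak_tensmx_delta.
Qed.
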